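(* Let $T>0$, $C_1>0$, and let $H:(0,1)^n\times\mathbb S(n)\to\mathbb R^n$, $B:(0,1)^n\times\mathbb S(n)\to\mathbb S(n)$ be $C^1$ with $H_i(\mu,p)\ge-C_1$ for all $(\mu,p)$ and $i$; let $g:[0,1]^n\to\mathbb R^n$, $\lambda\in[0,1]$, $t\in[0,T)$, $\mu\in\mathcal P_0(\mathbb G)$. If $(\phi,\rho):[t,T]\to\mathbb R^n\times(0,1)^n$ is a classical solution of $$\dot\phi=H(\rho,\lambda\nabla_{\mathbb G}\phi)-\Delta_{\mathbb G}\phi,\quad\dot\rho=\nabla_{\mathbb G}\cdot B(\rho,\lambda\nabla_{\mathbb G}\phi)+\Delta_{\mathbb G}\rho\ \text{ on }(t,T),\quad\phi(T)=g(\rho(T)),\ \rho(t)=\mu,$$ then $\max_{1\le i\le n}\phi_i(s)\le C_1(T-s)+\max_{1\le i\le n}\phi_i(T)$ for all $s\in[t,T]$.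
   Context: $\mathbb G$: finite connected simple undirected graph on $\{1,\dots,n\}$ with symmetric edge weights $\omega_{ij}>0$ iff $(i,j)\in\mathbb E$. $\mathbb S(n)$: skew-symmetric matrices. $(\nabla_{\mathbb G}u)^{ij}=\sqrt{\omega_{ij}}(u^i-u^j)$, $(\nabla_{\mathbb G}\cdot m)^i=\sum_{j\ne i}\sqrt{\omega_{ij}}m^{ji}$, $(\Delta_{\mathbb G}u)^i=\sum_j\omega_{ij}(u^j-u^i)$. $\mathcal P_0(\mathbb G)$: probability vectors with positive entries. Classical solution: a $C^1$ pair satisfying the system pointwise. *)

From mathcomp Require Import all_boot all_order all_algebra.
From mathcomp Require Import all_classical all_reals all_analysis.
Set Implicit Arguments. Unset Strict Implicit. Unset Printing Implicit Defensive.
Import Order.TTheory GRing.Theory Num.Theory numFieldNormedType.Exports.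
Local Open Scope classical_set_scope.
Local Open Scope ring_scope.

Section Defs.
Variable R : realType.
Variable m : nat. (* vertices are 'I_m *)

(* weighted graph given by its weight matrix: omega i j > 0 iff (i,j) is an edge *)
Definition weighted_graph (w : 'M[R]_m) : Prop :=
  (forall i j, w i j = w j i) /\ (forall i, w i i = 0) /\ (forall i j, 0 <= w i j).
Definition connected_graph (w : 'M[R]_m) : Prop :=
  forall i j, connect [rel a b | 0 < w a b] i j.

(* skew-symmetric matrices S(n) *)
Definition skew_symm (p : 'M[R]_m) : Prop := p^T = - p.
Definition skew_part (p : 'M[R]_m) : 'M[R]_m := 2^-1 *: (p - p^T).

Definition gradG (w : 'M[R]_m) (u : 'rV[R]_m) : 'M[R]_m :=
  \matrix_(i, j) (Num.sqrt (w i j) * (u ord0 i - u ord0 j)).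
Definition divG (w : 'M[R]_m) (q : 'M[R]_m) : 'rV[R]_m :=
  \row_i \sum_(j < m | j != i) Num.sqrt (w i j) * q j i.
Definition lapG (w : 'M[R]_m) (u : 'rV[R]_m) : 'rV[R]_m :=
  \row_i \sum_(j < m) w i j * (u ord0 j - u ord0 i).

Definition P0 (mu : 'rV[R]_m) : Prop :=
  (forall i, 0 < mu ord0 i) /\ \sum_(i < m) mu ord0 i = 1.

Definition in_open_cube (x : 'rV[R]_m) : Prop := forall i, 0 < x ord0 i < 1.

(* the domain (0,1)^n x M_n (open); functions on (0,1)^n x S(n) are
   extended to it through the projection onto the skew part *)
Definition cubeM : set ('rV[R]_m * 'M[R]_m) := [set x | in_open_cube x.1].

Definition C1_on (V W : normedModType R) (U : set V) (f : V -> W) : Prop :=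
  (forall x, U x -> differentiable f x) /\
  (forall v, {within U, continuous (fun x => 'D_v f x)}).

Definition C1_cube_skew (W : normedModType R) (F : 'rV[R]_m -> 'M[R]_m -> W) : Prop :=
  C1_on cubeM (fun x : 'rV[R]_m * 'M[R]_m => F x.1 (skew_part x.2)).

Definition C1_interval (V : normedModType R) (a b : R) (f f' : R -> V) : Prop :=
  (forall s, a <= s <= b ->
     h^-1 *: (f (s + h) - f s) @[h --> within [set h | a <= s + h <= b] (0 : R)^']
       --> f' s) /\
  {within [set s | a <= s <= b], continuous f'}.

End Defs.

Definition vmax (R : realType) (m : nat) (v : 'rV[R]_m.+1) : R :=
  \big[Num.max/v ord0 ord0]_(i < m.+1) v ord0 i.

From mathcomp Require Import all_boot all_order all_algebra.
From mathcomp Require Import all_classical all_reals all_analysis.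
From mathcomp Require Import lra ring.
Import Order.TTheory GRing.Theory Num.Theory numFieldNormedType.Exports.
Set Implicit Arguments. Unset Strict Implicit. Unset Printing Implicit Defensive.
Local Open Scope classical_set_scope.
Local Open Scope ring_scope.

(* At a vertex i where phi(s) attains its maximum the graph Laplacian is
   nonpositive, so phi_i'(s) >= H_i - 0 >= -C1.  Hence for every eps > 0 the
   function G(s) = max_i phi_i(s) + (C1 + eps) s strictly increases to the
   right of every interior time; being continuous, G is then bounded on
   [t, T] by G(T).  Letting eps -> 0 gives the bound. *)

Definition continuous_on_cc (R : realType) (V : normedModType R) (a b : R)
    (G : R -> V) : Prop :=
  forall s, a <= s <= b -> forall e, 0 < e -> exists2 d : R, 0 < d &
    forall r, a <= r <= b -> `|r - s| < d -> `|G r - G s| < e.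

Section ContinuityOnClosedInterval.
Variables (R : realType) (a b : R).

Lemma continuous_on_ccD (V : normedModType R) (F G : R -> V) :
  continuous_on_cc a b F -> continuous_on_cc a b G ->
  continuous_on_cc a b (fun r => F r + G r).
Proof.
move=> Fc Gc s hs e e0.
have e20 : 0 < e / 2 by rewrite divr_gt0.
have [d1 d10 Fd] := Fc s hs _ e20.
have [d2 d20 Gd] := Gc s hs _ e20.
exists (Num.min d1 d2); first by rewrite lt_min d10 d20.
move=> r hr; rewrite lt_min => /andP[rd1 rd2].
rewrite opprD addrACA.
have := ler_normD (F r - F s) (G r - G s).
have := Fd r hr rd1; have := Gd r hr rd2; lra.
Qed.

Lemma continuous_on_cc_mulr (c : R) : continuous_on_cc a b ( *%R c).
Proof.
move=> s _ e e0.
have c1 : 0 < `|c| + 1 by have := normr_ge0 c; lra.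
exists (e / (`|c| + 1)); first by rewrite divr_gt0.
move=> r _ rs; rewrite -mulrBr normrM.
have : `|c| * `|r - s| <= (`|c| + 1) * `|r - s| by rewrite ler_wpM2r //; lra.
have : (`|c| + 1) * `|r - s| < e by rewrite mulrC -ltr_pdivlMr.
lra.
Qed.

End ContinuityOnClosedInterval.

Section RightIncreasing.
Variables (R : realType) (a b : R) (G : R -> R).
Hypotheses (ab : a < b) (G_cont : continuous_on_cc a b G).
Hypothesis G_right_incr : forall s, a < s < b ->
  exists h : R, [/\ 0 < h, s + h <= b & G s < G (s + h)].

(* [sup {r in [s, b] | G s <= G r}] belongs to the set by continuity, and
   right-increase forbids it to lie below [b]. *)
Lemma right_increasing_le_end_open s : a < s <= b -> G s <= G b.
Proof.
move=> /andP[a_s sb].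
pose A := [set r | s <= r <= b /\ G s <= G r].
have As : A s by split; rewrite ?lexx ?sb.
have A_sup : has_sup A by split; [exists s | exists b => r [/andP[]]].
have le_sup r : A r -> r <= sup A by move=> Ar; apply: sup_upper_bound.
have s_sup : s <= sup A by apply: le_sup.
have sup_b : sup A <= b by apply: ge_sup; [exists s | move=> r [/andP[]]].
have G_sup : G s <= G (sup A).
  rewrite leNgt; apply/negP => lt_sup.
  have gap : 0 < G s - G (sup A) by lra.
  have [d d0 Gd] := G_cont (s := sup A) ltac:(lra) gap.
  have [r [/andP[sr rb] Gr] rd] := sup_adherent d0 A_sup.
  have r_sup : r <= sup A by apply: le_sup; split => //; rewrite sr rb.
  have := Gd r ltac:(lra) ltac:(rewrite ltr_norml; lra).
  rewrite ltr_norml; lra.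
suff <- : sup A = b by [].
apply/eqP; rewrite eq_le sup_b leNgt; apply/negP => sup_lt.
have [h [h0 hb Gh]] := G_right_incr (s := sup A) ltac:(lra).
have : sup A + h <= sup A by apply: le_sup; split; [apply/andP; split|]; lra.
lra.
Qed.

Lemma right_increasing_le_end s : a <= s <= b -> G s <= G b.
Proof.
move=> /andP[]; rewrite le_eqVlt => /orP[/eqP <- _|a_s sb]; last first.
  by apply: right_increasing_le_end_open; rewrite a_s sb.
rewrite leNgt; apply/negP => Gb_lt.
have gap : 0 < G a - G b by lra.
have aab : a <= a <= b by rewrite lexx ltW.
have [d d0 Gd] := G_cont aab gap.
pose r := Num.min (a + d / 2) b.
have ar : a < r by rewrite lt_min ab andbT; lra.
have rb : r <= b by rewrite ge_min lexx orbT.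
have rd : r <= a + d / 2 by rewrite ge_min lexx.
have := right_increasing_le_end_open (s := r) ltac:(lra).
have := Gd r ltac:(lra) ltac:(rewrite ltr_norml; lra).
rewrite ltr_norml; lra.
Qed.

End RightIncreasing.

Section C1Interval.
Variables (R : realType) (V : normedModType R) (t T : R) (f f' : R -> V).
Hypothesis f_C1 : C1_interval t T f f'.

Lemma C1_interval_diff_quotient s : t <= s <= T ->
  forall e, 0 < e -> exists2 d : R, 0 < d & forall h, h != 0 ->
    t <= s + h <= T -> `|h| < d -> `|f' s - h^-1 *: (f (s + h) - f s)| < e.
Proof.
move=> hs e e0; have [+ _] := f_C1.
move=> /(_ s hs) /cvgr_dist_lt /(_ e e0) /nbhs_ballP[d d0 Hd].
exists d => // h h0 hsT hd; apply: Hd => //.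
by rewrite /ball /= sub0r normrN.
Qed.

Lemma C1_interval_continuous : continuous_on_cc t T f.
Proof.
move=> s hs e e0.
have [d1 d10 Hd1] := C1_interval_diff_quotient hs ltr01.
pose K := `|f' s| + 1.
have K0 : 0 < K by rewrite /K; have := normr_ge0 (f' s); lra.
exists (Num.min d1 (e / K)); first by rewrite lt_min d10 divr_gt0.
move=> r hr; rewrite lt_min => /andP[rd1 rdK].
have [->|rs] := eqVneq r s; first by rewrite subrr normr0.
have := Hd1 (r - s); rewrite (addrC s) subrK subr_eq0 => /(_ rs hr rd1) quot_near.
set D := f r - f s in quot_near *.
have quot_lt : `|(r - s)^-1 *: D| < K.
  have := ler_normD ((r - s)^-1 *: D - f' s) (f' s); rewrite subrK distrC.
  rewrite /K; lra.
have -> : D = (r - s) *: ((r - s)^-1 *: D).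
  by rewrite scalerA divff ?scale1r // subr_eq0.
rewrite normrZ.
have : `|r - s| * `|(r - s)^-1 *: D| <= `|r - s| * K by rewrite ler_wpM2l // ltW.
have : `|r - s| * K < e by rewrite -ltr_pdivlMr.
lra.
Qed.

End C1Interval.

Section RowMaximum.
Variable R : realType.

Lemma le_vmax n (v : 'rV[R]_n.+1) i : v ord0 i <= vmax v.
Proof. exact: le_bigmax. Qed.

Lemma vmax_le n (v : 'rV[R]_n.+1) c : (forall i, v ord0 i <= c) -> vmax v <= c.
Proof. by move=> vc; apply: bigmax_le. Qed.

Lemma vmax_attained n (v : 'rV[R]_n.+1) : exists i, vmax v = v ord0 i.
Proof.
apply: (big_ind (fun x => exists i, x = v ord0 i)) => [|x y [i ->] [j ->]|i _].
- by exists ord0.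
- by rewrite /Num.max; case: ifP => _; [exists j | exists i].
- by exists i.
Qed.

Lemma entry_le_mx_norm m n (A : 'M[R]_(m, n)) i j : `|A i j| <= `|A|.
Proof. by rewrite [`|A|]mx_normrE; apply: (le_bigmax _ _ (i, j)). Qed.

Lemma vmax_lipschitz n (u v : 'rV[R]_n.+1) : vmax u <= vmax v + `|u - v|.
Proof.
apply: vmax_le => i.
have := entry_le_mx_norm (u - v) ord0 i; rewrite !mxE.
have := le_vmax v i; have := ler_norm (u ord0 i - v ord0 i); lra.
Qed.

Lemma continuous_on_cc_vmax n (a b : R) (f : R -> 'rV[R]_n.+1) :
  continuous_on_cc a b f -> continuous_on_cc a b (fun r => vmax (f r)).
Proof.
move=> fc s hs e e0; have [d d0 fd] := fc s hs e e0.
exists d => // r hr rd; have := fd r hr rd.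
have := vmax_lipschitz (f r) (f s); have := vmax_lipschitz (f s) (f r).
rewrite distrC ltr_norml; lra.
Qed.

Lemma C1_interval_right_increment n (t T : R) (f f' : R -> 'rV[R]_n.+1) :
  C1_interval t T f f' -> forall s, t <= s < T -> forall i e, 0 < e ->
  exists h : R, [/\ 0 < h, s + h <= T &
    h * (f' s ord0 i - e) < f (s + h) ord0 i - f s ord0 i].
Proof.
move=> f_C1 s /andP[ts sT] i e e0.
have [d d0 fd] := C1_interval_diff_quotient f_C1 (s := s) ltac:(lra) e0.
pose h := Num.min (d / 2) (T - s).
have h0 : 0 < h by rewrite lt_min; apply/andP; split; lra.
have hT : h <= T - s by rewrite ge_min lexx orbT.
have hd : h <= d / 2 by rewrite ge_min lexx.
exists h; split; [by [] | lra |].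
have := fd h (lt0r_neq0 h0) ltac:(lra) ltac:(rewrite gtr0_norm //; lra).
move=> /(le_lt_trans (entry_le_mx_norm _ ord0 i)); rewrite !mxE ltr_norml.
move=> /andP[_]; rewrite ltrBlDr -ltrBlDl -(ltr_pM2l h0).
by rewrite mulrA mulfV ?gt_eqF // mul1r.
Qed.

End RowMaximum.

Section BackwardMaximumBound.
Variables (R : realType) (n : nat) (t T C : R) (f f' : R -> 'rV[R]_n.+1).
Hypotheses (tT : t < T) (f_C1 : C1_interval t T f f').
Hypothesis deriv_at_max_ge : forall s, t < s < T ->
  forall i, f s ord0 i = vmax (f s) -> - C <= f' s ord0 i.

Lemma vmax_add_slope_right_increasing c : C < c -> forall r, t < r < T ->
  exists h : R, [/\ 0 < h, r + h <= T &
    vmax (f r) + c * r < vmax (f (r + h)) + c * (r + h)].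
Proof.
move=> Cc r /andP[tr rT].
have [i fi_max] := vmax_attained (f r).
have cC : 0 < c - C by lra.
have [h [h0 hT incr]] := C1_interval_right_increment f_C1 (s := r) ltac:(lra) i cC.
exists h; split => //.
have fi'_ge := deriv_at_max_ge (s := r) ltac:(lra) (esym fi_max).
have : h * (- C - (c - C)) <= h * (f' r ord0 i - (c - C)).
  by rewrite ler_pM2l //; lra.
have := le_vmax (f (r + h)) i.
rewrite fi_max mulrDr; lra.
Qed.

Lemma vmax_add_slope_le c : C < c -> forall s, t <= s <= T ->
  vmax (f s) + c * s <= vmax (f T) + c * T.
Proof.
move=> Cc; apply: right_increasing_le_end tT _ (vmax_add_slope_right_increasing Cc).
apply: continuous_on_ccD; last exact: continuous_on_cc_mulr.
by apply: continuous_on_cc_vmax; apply: C1_interval_continuous f_C1.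
Qed.

Lemma vmax_le_backward s : t <= s <= T ->
  vmax (f s) <= C * (T - s) + vmax (f T).
Proof.
move=> /andP[ts sT]; apply/ler_addgt0Pr => e e0.
pose eps := e / (T - s + 1).
have eps0 : 0 < eps by rewrite divr_gt0 //; lra.
have eps_e : eps * (T - s) <= e.
  have -> : e = eps * (T - s + 1) by rewrite mulrVK // unitfE gt_eqF //; lra.
  by rewrite ler_pM2l //; lra.
have := vmax_add_slope_le (c := C + eps) ltac:(lra) (s := s) ltac:(lra).
have -> : (C + eps) * T = (C + eps) * s + C * (T - s) + eps * (T - s) by ring.
lra.
Qed.

End BackwardMaximumBound.

Section GraphOperators.
Variable R : realType.

Lemma lapG_le0_at_vmax n (w : 'M[R]_n.+1) (u : 'rV[R]_n.+1) i :
  (forall i j, 0 <= w i j) -> u ord0 i = vmax u -> lapG w u ord0 i <= 0.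
Proof.
move=> w_ge0 ui_max; rewrite mxE; apply: sumr_le0 => j _.
by rewrite mulr_ge0_le0 // subr_le0 ui_max le_vmax.
Qed.

Lemma gradG_skew m (w : 'M[R]_m) (u : 'rV[R]_m) :
  (forall i j, w i j = w j i) -> skew_symm (gradG w u).
Proof. by move=> w_sym; apply/matrixP => i j; rewrite !mxE w_sym; ring. Qed.

Lemma skew_symmZ m (a : R) (p : 'M[R]_m) : skew_symm p -> skew_symm (a *: p).
Proof. by rewrite /skew_symm linearZ /= => ->; rewrite scalerN. Qed.

End GraphOperators.

Theorem lemma3p2 (R : realType) (n : nat) (w : 'M[R]_n.+1)
  (T C1 : R)
  (H : 'rV[R]_n.+1 -> 'M[R]_n.+1 -> 'rV[R]_n.+1)
  (B : 'rV[R]_n.+1 -> 'M[R]_n.+1 -> 'M[R]_n.+1)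
  (g : 'rV[R]_n.+1 -> 'rV[R]_n.+1) (lam t : R) (mu : 'rV[R]_n.+1)
  (phi rho phi' rho' : R -> 'rV[R]_n.+1) :
  weighted_graph w -> connected_graph w ->
  0 < T -> 0 < C1 ->
  C1_cube_skew H -> C1_cube_skew B ->
  (forall (x : 'rV[R]_n.+1) (p : 'M[R]_n.+1), in_open_cube x -> skew_symm p ->
     skew_symm (B x p)) ->
  (forall (x : 'rV[R]_n.+1) (p : 'M[R]_n.+1), in_open_cube x -> skew_symm p ->
     forall i, - C1 <= H x p ord0 i) ->
  0 <= lam <= 1 -> 0 <= t < T -> P0 mu ->
  (* (phi, rho) is a classical solution on [t, T] *)
  C1_interval t T phi phi' -> C1_interval t T rho rho' ->
  (forall s, t <= s <= T -> in_open_cube (rho s)) ->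
  (forall s, t < s < T ->
     phi' s = H (rho s) (lam *: gradG w (phi s)) - lapG w (phi s)) ->
  (forall s, t < s < T ->
     rho' s = divG w (B (rho s) (lam *: gradG w (phi s))) + lapG w (rho s)) ->
  phi T = g (rho T) -> rho t = mu ->
  forall s, t <= s <= T -> vmax (phi s) <= C1 * (T - s) + vmax (phi T).
Proof.
move=> [w_sym [_ w_ge0]] _ _ _ _ _ _ H_ge _ /andP[_ tT] _ phi_C1 _ rho_cube
  phi_eq _ _ _.
apply: vmax_le_backward tT phi_C1 _ => r /andP[tr rT] i phi_max.
rewrite phi_eq ?tr ?rT // !mxE.
have rho_r : in_open_cube (rho r) by apply: rho_cube; rewrite !ltW.
have := H_ge _ _ rho_r (skew_symmZ lam (gradG_skew (phi r) w_sym)) i.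
have := lapG_le0_at_vmax w_ge0 phi_max; rewrite mxE.
lra.
Qed.
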